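(* Let $K$ be a skew field with center $P$ and an involution, $\mathcal C$ a linear category over $P$ with involution, and $S_0$ a set of objects containing exactly one object from each pair $\{u,u^*\}$. If a representation $A$ of $\mathcal C$ over $K$ is isomorphic to a selfadjoint representation, then there exist a selfadjoint representation $B$ and an isomorphism $h:A\to B$ such that $B_v=A_v$ and $h_v=1$ for all $v\in S_0$.
   Context: $K$ has an involution $a\mapsto\bar a$. Linear category over $P$: $P$-vector-space Hom sets, bilinear composition; involution on it: $u\mapsto u^*$, $(\alpha:u\to v)\mapsto(\alpha^*:v^*\to u^* )$, $u^{**}=u\ne u^*$, $\alpha^{**}=\alpha$, $(\alpha\beta)^*=\beta^*\alpha^*$, $(\alpha a)^*=\alpha^*\bar a$. Representations: functors to finite-dimensional right $K$-spaces, finite total dimension, preserving $P$-linear combinations; morphisms: natural transformations. $V^*$: semilinear forms ($\varphi(xa)=\bar a\varphi(x)$), $A^*\varphi=\varphi A$, $V^{**}=V$. Adjoint representation: $A^\circ_u=(A_{u^*})^*$, $A^\circ_\alpha=(A_{\alpha^*})^*$; selfadjoint means $A=A^\circ$. *)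

From HB Require Import structures.
From mathcomp Require Import all_boot all_order all_algebra.
From Stdlib Require List.
Set Implicit Arguments. Unset Strict Implicit. Unset Printing Implicit Defensive.
Import GRing.Theory.
Local Open Scope ring_scope.

Record lincat (P : fieldType) := LinCat {
  obj : Type;
  hom : obj -> obj -> lmodType P;
  idm : forall u, hom u u;
  comp : forall u v w, hom v w -> hom u v -> hom u w;
  ostar : obj -> obj;
  hstar : forall u v, hom u v -> hom (ostar v) (ostar u) }.

Arguments obj {P} _.
Arguments hom {P} _ _ _.
Arguments idm {P} _ _.
Arguments comp {P _ _ _ _}.
Arguments ostar {P} _ _.
Arguments hstar {P _ _ _}.

Definition hcast (P : fieldType) (C : lincat P) (u u' v v' : obj C)
  (eu : u = u') (ev : v = v') (a : hom C u v) : hom C u' v' :=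
  match eu in _ = u1, ev in _ = v1 return hom C u1 v1 with
  | erefl, erefl => a end.

(* Axioms: linear category over P (bilinear associative unital composition)
   with an involution; conjP is the involution of K restricted to P. *)
Definition is_lincat_inv (P : fieldType) (conjP : P -> P) (C : lincat P)
  (starK : forall u, ostar C (ostar C u) = u) : Prop :=
  [/\ (forall u v w x (a : hom C w x) (b : hom C v w) (c : hom C u v),
          comp a (comp b c) = comp (comp a b) c),
      (forall u v (a : hom C u v), comp (idm C v) a = a /\ comp a (idm C u) = a),
      (forall u v w (a a' : hom C v w) (b b' : hom C u v) (p : P),
          [/\ comp (a + a') b = comp a b + comp a' b,
              comp a (b + b') = comp a b + comp a b',
              comp (p *: a) b = p *: comp a b &
              comp a (p *: b) = p *: comp a b]),
      (forall u, ostar C u <> u) &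
      (forall u v w (a a' : hom C u v) (b : hom C w u) (p : P),
          [/\ hstar (a + a') = hstar a + hstar a',
              hstar (p *: a) = conjP p *: hstar a,
              hstar (comp a b) = comp (hstar b) (hstar a) &
              hcast (starK u) (starK v) (hstar (hstar a)) = a])].

(* Representations over K, in coordinates: the space at u is the right
   K-space K^(rdim u) (column vectors), a K-linear map is a matrix acting
   on the left. *)
Record rep (K : nzRingType) (P : fieldType) (C : lincat P) := Rep {
  rdim : obj C -> nat;
  rmap : forall u v, hom C u v -> 'M[K]_(rdim v, rdim u) }.

Arguments rmap {K P C} _ {_ _}.

Definition is_rep (K : nzRingType) (P : fieldType) (C : lincat P)
  (iota : P -> K) (A : rep K C) : Prop :=
  [/\ (exists s : seq (obj C), forall u, (0 < rdim A u)%N -> List.In u s),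
      (forall u, rmap A (idm C u) = 1%:M),
      (forall u v w (a : hom C v w) (b : hom C u v),
          rmap A (comp a b) = rmap A a *m rmap A b),
      (forall u v (a b : hom C u v), rmap A (a + b) = rmap A a + rmap A b) &
      (forall u v (p : P) (a : hom C u v), rmap A (p *: a) = iota p *: rmap A a)].

Definition is_rep_mor (K : nzRingType) (P : fieldType) (C : lincat P)
  (A B : rep K C) (f : forall u, 'M[K]_(rdim B u, rdim A u)) : Prop :=
  forall u v (a : hom C u v), f v *m rmap A a = rmap B a *m f u.

Definition is_rep_iso (K : nzRingType) (P : fieldType) (C : lincat P)
  (A B : rep K C) (f : forall u, 'M[K]_(rdim B u, rdim A u)) : Prop :=
  is_rep_mor f /\
  forall u, exists g : 'M[K]_(rdim A u, rdim B u), g *m f u = 1%:M /\ f u *m g = 1%:M.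

(* Dual map of A, namely phi |-> phi A, in coordinates: identifying the space of
   semilinear forms on K^n with K^n via c |-> (x |-> sum_i conj(x_i) c_i),
   the dual of the matrix M is its conjugate transpose. *)
Definition conjT (K : nzRingType) (conj : K -> K) m n (M : 'M[K]_(m, n))
  : 'M[K]_(n, m) := \matrix_(i, j) conj (M j i).

Definition adjoint (K : nzRingType) (P : fieldType) (C : lincat P)
  (conj : K -> K) (A : rep K C) : rep K C :=
  @Rep K P C (fun u => rdim A (ostar C u))
    (fun u v a => conjT conj (rmap A (hstar a))).

From Pilot Require Import Defs.
From HB Require Import structures.
From mathcomp Require Import all_boot all_order all_algebra.
From Stdlib Require Import FunctionalExtensionality ClassicalEpsilon.
Set Implicit Arguments. Unset Strict Implicit. Unset Printing Implicit Defensive.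
Import GRing.Theory.
Local Open Scope ring_scope.

(* Let f : A -> A' be the given isomorphism onto a selfadjoint A', with
   inverse g.  Transporting A' along any family of invertible matrices k_u
   gives a representation isomorphic to A', and it is again selfadjoint as soon
   as k_{u*} is the adjoint of k_u^-1.  Take k_v = g_v for v in S0 and
   k_{v*} = f_v^°, the adjoint of f_v = g_v^-1: as S0 contains exactly one
   object of each pair {v, v*}, this choice is consistent, and on S0 the
   isomorphism k f = g f is the identity. *)

(* Matrices of different (propositionally equal) sizes are compared through
   their entries extended by 0 to nat x nat; this avoids all dimension casts. *)
Section MatrixFunctions.
Variable K : nzRingType.

Definition mxfun m n (M : 'M[K]_(m, n)) (i j : nat) : K :=
  if insub i is Some i' then if insub j is Some j' then M i' j' else 0 else 0.

Definition mulf (p : nat) (F G : nat -> nat -> K) (i j : nat) : K :=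
  \sum_(l < p) F i l * G l j.

Definition idf (m : nat) (i j : nat) : K := ((i == j) && (i < m)%N)%:R.

Lemma fun2_ext (F G : nat -> nat -> K) : F =2 G -> F = G.
Proof. by move=> eFG; do 2 apply: functional_extensionality => ?; rewrite eFG. Qed.

Lemma mxfunE m n (M : 'M[K]_(m, n)) (i : 'I_m) (j : 'I_n) : mxfun M i j = M i j.
Proof. by rewrite /mxfun !valK. Qed.

Lemma mxfun_out m n (M : 'M[K]_(m, n)) i j :
  ~~ ((i < m) && (j < n))%N -> mxfun M i j = 0.
Proof.
rewrite /mxfun negb_and => /orP[hi | hj]; first by rewrite insubN.
by case: insub => // ?; rewrite insubN.
Qed.

Lemma mxfun_inj m n : injective (@mxfun m n).
Proof. by move=> M N eMN; apply/matrixP => i j; rewrite -!mxfunE eMN. Qed.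

Lemma mxfun_charact m n (M : 'M[K]_(m, n)) (F : nat -> nat -> K) :
  (forall (i : 'I_m) (j : 'I_n), M i j = F i j) ->
  (forall i j, ~~ ((i < m) && (j < n))%N -> F i j = 0) -> mxfun M = F.
Proof.
move=> Min Fout; apply: fun2_ext => i j.
case: (boolP ((i < m) && (j < n))%N) => [/andP[hi hj] | hout].
  by rewrite (mxfunE M (Ordinal hi) (Ordinal hj)) Min.
by rewrite mxfun_out // Fout.
Qed.

Lemma mxfun_castmx m n m' n' (e : (m = m') * (n = n')) (M : 'M[K]_(m, n)) :
  mxfun (castmx e M) = mxfun M.
Proof. by case: e => em en; case: m' / em; case: n' / en; rewrite castmx_id. Qed.

Lemma mxfun_mul m p n (M : 'M[K]_(m, p)) (N : 'M[K]_(p, n)) :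
  mxfun (M *m N) = mulf p (mxfun M) (mxfun N).
Proof.
apply: mxfun_charact => [i j | i j]; rewrite /mulf.
  by rewrite mxE; apply: eq_bigr => l _; rewrite !mxfunE.
rewrite negb_and => /orP[hi | hj]; apply: big1 => l _.
  by rewrite mxfun_out ?mul0r // negb_and hi.
by rewrite (mxfun_out N) ?mulr0 // negb_and hj orbT.
Qed.

Lemma mxfun1 m : mxfun (1%:M : 'M[K]_m) = idf m.
Proof.
apply: mxfun_charact => [i j | i j]; first by rewrite mxE /idf ltn_ord andbT.
rewrite /idf negb_and; case: eqP => [-> | _] //=.
by rewrite orbb => /negbTE ->.
Qed.

End MatrixFunctions.

Section AntiInvolution.
Variables (K : nzRingType) (conj : K -> K).
Hypothesis conjD : forall x y : K, conj (x + y) = conj x + conj y.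
Hypothesis conjM : forall x y : K, conj (x * y) = conj y * conj x.
Hypothesis conjK : involutive conj.

Lemma conj0 : conj 0 = 0.
Proof. by apply: (addrI (conj 0)); rewrite -conjD !addr0. Qed.

Lemma conj1 : conj 1 = 1.
Proof. by have := conjM (conj 1) 1; rewrite mulr1 conjK mulr1 => <-. Qed.

Definition conjf (F : nat -> nat -> K) (i j : nat) : K := conj (F j i).

Lemma mxfun_conjT m n (M : 'M[K]_(m, n)) :
  mxfun (conjT conj M) = conjf (mxfun M).
Proof.
apply: mxfun_charact => [i j | i j]; first by rewrite mxE /conjf mxfunE.
by rewrite andbC => hout; rewrite /conjf mxfun_out // conj0.
Qed.

Lemma conjfK : involutive conjf.
Proof. by move=> F; apply: fun2_ext => i j; rewrite /conjf conjK. Qed.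

Lemma conjf_mul p F G : conjf (mulf p F G) = mulf p (conjf G) (conjf F).
Proof.
apply: fun2_ext => i j.
rewrite /conjf /mulf (big_morph conj conjD conj0).
by apply: eq_bigr => l _; rewrite conjM.
Qed.

Lemma conjf_id m : conjf (idf K m) = idf K m.
Proof.
apply: fun2_ext => i j; rewrite /conjf /idf.
have [-> | _] := eqVneq i j; last by rewrite conj0.
by case: (j < m)%N; rewrite ?conj1 ?conj0.
Qed.

End AntiInvolution.

Lemma scalemxAr_central (K : nzRingType) (c : K) m n p
    (A : 'M[K]_(m, n)) (B : 'M[K]_(n, p)) :
  (forall y, c * y = y * c) -> A *m (c *: B) = c *: (A *m B).
Proof.
move=> cC; apply/matrixP => i j; rewrite !mxE mulr_sumr.
by apply: eq_bigr => l _; rewrite mxE mulrA -cC mulrA.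
Qed.

Section Representations.
Variables (K : nzRingType) (P : fieldType) (C : lincat P).

Lemma rep_ext (R1 R2 : rep K C) :
  rdim R1 = rdim R2 ->
  (forall u v (a : Defs.hom C u v), mxfun (rmap R1 a) = mxfun (rmap R2 a)) -> R1 = R2.
Proof.
case: R1 R2 => [d m1] [d' m2] /= edd'; subst d' => em; congr Rep.
do 3 apply: functional_extensionality_dep => ?; exact/mxfun_inj/em.
Qed.

Lemma is_rep_iso_comp (A B D : rep K C) (f : forall u, 'M_(rdim B u, rdim A u))
    (g : forall u, 'M_(rdim D u, rdim B u)) :
  is_rep_iso f -> is_rep_iso g -> is_rep_iso (fun u => g u *m f u).
Proof.
move=> [fN fI] [gN gI]; split=> [u v a | u].
  by rewrite -mulmxA fN !mulmxA gN.
have [[f' [f'f ff']] [g' [g'g gg']]] := (fI u, gI u).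
exists (f' *m g'); split.
  by rewrite mulmxA -(mulmxA f') g'g mulmx1.
by rewrite mulmxA -(mulmxA (g u)) ff' mulmx1.
Qed.

Section Transport.
Variables (R : rep K C) (d : obj C -> nat).
Variables (k : forall u, 'M[K]_(d u, rdim R u))
          (kinv : forall u, 'M[K]_(rdim R u, d u)).
Hypothesis k_kinv : forall u, k u *m kinv u = 1%:M.
Hypothesis kinv_k : forall u, kinv u *m k u = 1%:M.

Definition transport_rep : rep K C := Rep (fun u v a => k v *m rmap R a *m kinv u).

Lemma transport_rep_iso : is_rep_iso (A := R) (B := transport_rep) k.
Proof.
split=> [u v a | u]; last by exists (kinv u).
by rewrite /= -mulmxA kinv_k mulmx1.
Qed.

Lemma transport_rep_dim_gt0 u : (0 < d u)%N -> (0 < rdim R u)%N.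
Proof.
case: (rdim R u) (k u) (kinv u) (k_kinv u) => // k0 kinv0.
rewrite thinmx0 mul0mx; case: (d u) => // n /matrixP /(_ ord0 ord0).
by rewrite !mxE /= => /eqP; rewrite eq_sym oner_eq0.
Qed.

Lemma is_rep_transport (iota : P -> K) :
  (forall p y, iota p * y = y * iota p) -> is_rep iota R -> is_rep iota transport_rep.
Proof.
move=> iotaC [[s Rs] R1 RM RD RZ]; split=> /= [|u|u v w a b|u v a b|u v p a].
- by exists s => u /transport_rep_dim_gt0/Rs.
- by rewrite R1 mulmx1 k_kinv.
- by rewrite RM !mulmxA -(mulmxA _ (kinv v)) kinv_k mulmx1.
- by rewrite RD mulmxDr mulmxDl.
- by rewrite RZ scalemxAr_central // -scalemxAl.
Qed.

End Transport.

Section Selfadjoint.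
Variable conj : K -> K.
Hypothesis conjD : forall x y : K, conj (x + y) = conj x + conj y.
Hypothesis conjM : forall x y : K, conj (x * y) = conj y * conj x.
Hypothesis conjK : involutive conj.
Hypothesis starK : forall u, ostar C (ostar C u) = u.
Variable R : rep K C.
Hypothesis R_selfadjoint : R = adjoint conj R.

Lemma rdim_selfadjoint u : rdim R (ostar C u) = rdim R u.
Proof. by rewrite [in RHS]R_selfadjoint. Qed.

Lemma mxfun_rmap_selfadjoint u v (a : Defs.hom C u v) :
  mxfun (rmap R a) = conjf conj (mxfun (rmap R (hstar a))).
Proof.
have mxfun_rmap_eq R' : R = R' -> mxfun (rmap R a) = mxfun (rmap R' a).
  by move=> eRR'; case: R' / eRR'.
by rewrite (mxfun_rmap_eq _ R_selfadjoint) /= mxfun_conjT.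
Qed.

Variable d : obj C -> nat.
Variables (k : forall u, 'M[K]_(d u, rdim R u))
          (kinv : forall u, 'M[K]_(rdim R u, d u)).
Hypothesis d_star : forall u, d (ostar C u) = d u.
Hypothesis k_star : forall u, conjf conj (mxfun (kinv (ostar C u))) = mxfun (k u).

Lemma kinv_star u : conjf conj (mxfun (k (ostar C u))) = mxfun (kinv u).
Proof. by rewrite -k_star conjfK // starK. Qed.

Lemma transport_rep_selfadjoint :
  transport_rep k kinv = adjoint conj (transport_rep k kinv).
Proof.
apply: rep_ext => [|u v a /=].
  by apply: functional_extensionality => u /=; rewrite d_star.
rewrite mxfun_conjT // !mxfun_mul !conjf_mul // k_star kinv_star.
rewrite -mxfun_rmap_selfadjoint !rdim_selfadjoint -!mxfun_mul.
by rewrite -mulmxA mxfun_mul.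
Qed.

End Selfadjoint.
End Representations.

Section Transversal.
Variables (K : nzRingType) (P : fieldType) (C : lincat P) (conj : K -> K).
Hypothesis conjD : forall x y : K, conj (x + y) = conj x + conj y.
Hypothesis conjM : forall x y : K, conj (x * y) = conj y * conj x.
Hypothesis conjK : involutive conj.
Hypothesis starK : forall u, ostar C (ostar C u) = u.
Variables (A A' : rep K C).
Hypothesis A'_selfadjoint : A' = adjoint conj A'.
Variables (f : forall u, 'M[K]_(rdim A' u, rdim A u))
          (g : forall u, 'M[K]_(rdim A u, rdim A' u)).
Hypothesis gf : forall u, g u *m f u = 1%:M.
Hypothesis fg : forall u, f u *m g u = 1%:M.
Variable s : obj C -> bool.
Hypothesis s_star : forall u, s (ostar C u) = ~~ s u.

Let rdimA'_star := rdim_selfadjoint A'_selfadjoint.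

Definition transversal_dim u := rdim A (if s u then u else ostar C u).

Definition transversal_mx u : 'M[K]_(transversal_dim u, rdim A' u) :=
  match s u as b return 'M_(rdim A (if b then u else ostar C u), rdim A' u) with
  | true => g u
  | false => castmx (erefl, rdimA'_star u) (conjT conj (f (ostar C u)))
  end.

Definition transversal_mxinv u : 'M[K]_(rdim A' u, transversal_dim u) :=
  match s u as b return 'M_(rdim A' u, rdim A (if b then u else ostar C u)) with
  | true => f u
  | false => castmx (rdimA'_star u, erefl) (conjT conj (g (ostar C u)))
  end.

Lemma transversal_dim_id u : s u -> transversal_dim u = rdim A u.
Proof. by rewrite /transversal_dim => ->. Qed.

Lemma transversal_dim_star u : transversal_dim (ostar C u) = transversal_dim u.
Proof. by rewrite /transversal_dim s_star; case: (s u); rewrite ?starK. Qed.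

Lemma mxfun_transversal_mx_in u : s u -> mxfun (transversal_mx u) = mxfun (g u).
Proof. by rewrite /transversal_mx /transversal_dim; case: (s u). Qed.

Lemma mxfun_transversal_mx_out u :
  ~~ s u -> mxfun (transversal_mx u) = conjf conj (mxfun (f (ostar C u))).
Proof.
rewrite /transversal_mx /transversal_dim; case: (s u) => // _.
by rewrite mxfun_castmx mxfun_conjT.
Qed.

Lemma mxfun_transversal_mxinv_in u : s u -> mxfun (transversal_mxinv u) = mxfun (f u).
Proof. by rewrite /transversal_mxinv /transversal_dim; case: (s u). Qed.

Lemma mxfun_transversal_mxinv_out u :
  ~~ s u -> mxfun (transversal_mxinv u) = conjf conj (mxfun (g (ostar C u))).
Proof.
rewrite /transversal_mxinv /transversal_dim; case: (s u) => // _.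
by rewrite mxfun_castmx mxfun_conjT.
Qed.

Lemma transversal_mxK u : transversal_mx u *m transversal_mxinv u = 1%:M.
Proof.
apply: mxfun_inj; rewrite mxfun_mul mxfun1; have [su | nsu] := boolP (s u).
  rewrite mxfun_transversal_mx_in // mxfun_transversal_mxinv_in //.
  by rewrite -mxfun_mul gf mxfun1 transversal_dim_id.
rewrite mxfun_transversal_mx_out // mxfun_transversal_mxinv_out // -conjf_mul //.
by rewrite -rdimA'_star -mxfun_mul gf mxfun1 conjf_id // /transversal_dim (negbTE nsu).
Qed.

Lemma transversal_mxinvK u : transversal_mxinv u *m transversal_mx u = 1%:M.
Proof.
apply: mxfun_inj; rewrite mxfun_mul mxfun1; have [su | nsu] := boolP (s u).
  rewrite mxfun_transversal_mx_in // mxfun_transversal_mxinv_in //.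
  by rewrite transversal_dim_id // -mxfun_mul fg mxfun1.
rewrite mxfun_transversal_mx_out // mxfun_transversal_mxinv_out // -conjf_mul //.
by rewrite /transversal_dim (negbTE nsu) -mxfun_mul fg mxfun1 conjf_id // rdimA'_star.
Qed.

Lemma transversal_mx_star u :
  conjf conj (mxfun (transversal_mxinv (ostar C u))) = mxfun (transversal_mx u).
Proof.
have [su | nsu] := boolP (s u).
  rewrite mxfun_transversal_mxinv_out ?s_star ?su // starK conjfK //.
  by rewrite mxfun_transversal_mx_in.
by rewrite mxfun_transversal_mxinv_in ?s_star // mxfun_transversal_mx_out.
Qed.

Lemma transversal_mx_mul_id u :
  s u -> mxfun (transversal_mx u *m f u) = idf K (rdim A u).
Proof.
by move=> su; rewrite mxfun_mul mxfun_transversal_mx_in // -mxfun_mul gf mxfun1.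
Qed.

End Transversal.

Lemma exists_bool_pred (T : Type) (Q : T -> Prop) :
  exists s : T -> bool, forall x, s x <-> Q x.
Proof.
exists (fun x => if excluded_middle_informative (Q x) then true else false) => x.
by case: excluded_middle_informative.
Qed.

Theorem lemma6 (K : unitRingType) (P : fieldType) (iota : {rmorphism P -> K})
  (conj : K -> K) (conjP : P -> P) (C : lincat P)
  (starK : forall u, ostar C (ostar C u) = u)
  (S0 : obj C -> Prop) (A : rep K C) :
  (forall x : K, x != 0 -> x \is a GRing.unit) ->
  (forall x : K, (forall y, x * y = y * x) <-> exists p, x = iota p) ->
  (forall x y : K, conj (x + y) = conj x + conj y) ->
  (forall x y : K, conj (x * y) = conj y * conj x) ->
  (forall x : K, conj (conj x) = x) ->
  (forall p : P, iota (conjP p) = conj (iota p)) ->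
  is_lincat_inv conjP starK ->
  (forall u, S0 u <-> ~ S0 (ostar C u)) ->
  is_rep iota A ->
  (exists (A' : rep K C) (f : forall u, 'M[K]_(rdim A' u, rdim A u)),
      [/\ is_rep iota A', A' = adjoint conj A' & is_rep_iso f]) ->
  exists (B : rep K C) (h : forall u, 'M[K]_(rdim B u, rdim A u)),
    [/\ is_rep iota B, B = adjoint conj B, is_rep_iso h &
        forall v, S0 v ->
          rdim B v = rdim A v /\
          (forall (i : 'I_(rdim B v)) (j : 'I_(rdim A v)),
              h v i j = (nat_of_ord i == nat_of_ord j)%:R)].
Proof.
move=> _ central conjD conjM conjK _ _ S0_star _ [A' [f [A'_rep A'_sa f_iso]]].
have [g [gf fg]] : exists g : forall u, 'M[K]_(rdim A u, rdim A' u),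
    (forall u, g u *m f u = 1%:M) /\ (forall u, f u *m g u = 1%:M).
  have g_ex u := constructive_indefinite_description _ (f_iso.2 u).
  by exists (fun u => proj1_sig (g_ex u)); split=> u; case: (proj2_sig (g_ex u)).
have [s sP] := exists_bool_pred S0.
have s_star u : s (ostar C u) = ~~ s u.
  apply/idP/negP => [/sP /S0_star + /sP | nsu]; first by rewrite starK.
  by apply/sP/S0_star; rewrite starK => /sP.
pose k := transversal_mx A'_sa f g s.
pose kinv := transversal_mxinv A'_sa f g s.
have k_kinv := transversal_mxK conjD conjM conjK A'_sa gf s.
have kinv_k := transversal_mxinvK conjD conjM conjK A'_sa fg s.
exists (transport_rep k kinv), (fun u => k u *m f u); split.
- by apply: is_rep_transport => // p; apply/central; exists p.
- apply: (transport_rep_selfadjoint conjD conjM conjK starK A'_sa).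
    exact: transversal_dim_star.
  exact: transversal_mx_star.
- exact: is_rep_iso_comp f_iso (transport_rep_iso k_kinv kinv_k).
move=> v /sP sv; have dv := transversal_dim_id A sv; split=> // i j.
have iA : (i < rdim A v)%N by rewrite -dv ltn_ord.
by rewrite -mxfunE transversal_mx_mul_id // /idf iA andbT.
Qed.
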